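(* Let $B$ be a one-dimensional standard Brownian motion with $B(0)=0$, let $\ell\in\mathcal{D}^-[0,\infty)$, $r\in\mathcal{D}^+[0,\infty)$ with $\ell\le r$, let $x\in\mathbb{R}$, let $W=\overline{\Gamma}_{\ell,r}(x+B)$ and $Y=W-x-B$. Let $\tau=\inf\{t>0: r(t)=\ell(t)\text{ or } r(t-)=\ell(t-)\}$ and assume $\tau\in(0,\infty)$. Let $K'\subseteq\mathbb{Z}$ and let $K$ be $K'$ with its largest element removed (if $K'$ has a largest element; otherwise $K=K'$). Suppose there is a strictly increasing sequence $\{s_k\}_{k\in K'}$ with values in $[0,\tau]$ and a constant $c_1\in(-\infty,\infty)$ such that for all $k\in K$ $$\frac{\min\big(r(s_{k+1})-\ell(s_k),\,-\ell(s_{k+1})+r(s_k)\big)}{(s_{k+1}-s_k)^{1/2}}\le c_1.$$ If $\sum_{k\in K}(s_{k+1}-s_k)^{1/2}=\infty$, then $\mathcal{V}_{[0,\tau]}Y=\infty$ almost surely.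
   Context: $\mathcal{D}[0,\infty)$ denotes the càdlàg functions $[0,\infty)\to(-\infty,\infty)$; $\mathcal{D}^-[0,\infty)$ (resp. $\mathcal{D}^+[0,\infty)$) denotes càdlàg functions with values in $[-\infty,\infty)$ (resp. $(-\infty,\infty]$). $\mathcal{V}_{[t_1,t_2]}(f)$ is the total variation of $f$ on $[t_1,t_2]$. ESP: $(\phi,\eta)\in\mathcal{D}[0,\infty)^2$ solves the extended Skorokhod problem on $[\ell(\cdot),r(\cdot)]$ for $\psi\in\mathcal{D}[0,\infty)$ if (1) $\phi(t)=\psi(t)+\eta(t)\in[\ell(t),r(t)]$ for all $t\ge0$; (2) for all $0\le s\le t$: $\eta(t)-\eta(s)\ge0$ if $\phi(u)<r(u)$ for all $u\in(s,t]$, and $\eta(t)-\eta(s)\le0$ if $\phi(u)>\ell(u)$ for all $u\in(s,t]$; (3) for all $t\ge0$: $\eta(t)-\eta(t-)\ge0$ if $\phi(t)<r(t)$, and $\eta(t)-\eta(t-)\le0$ if $\phi(t)>\ell(t)$, where $\eta(0-)=0$. For $\ell\le r$ this problem has a unique solution for every $\psi$; $\overline{\Gamma}_{\ell,r}(\psi)$ denotes its first component (applied pathwise). $W$ is the reflected Brownian motion on $[\ell(\cdot),r(\cdot)]$ and $Y$ its local time on the boundary. *)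

From HB Require Import structures.
From mathcomp Require Import all_boot all_order all_algebra.
From mathcomp Require Import all_classical all_reals all_analysis.
Set Implicit Arguments. Unset Strict Implicit. Unset Printing Implicit Defensive.
Import Order.TTheory GRing.Theory Num.Theory.
Import numFieldNormedType.Exports.
Local Open Scope classical_set_scope.
Local Open Scope ring_scope.

Section Defs.
Variable R : realType.

Definition cadlag (f : R -> R) : Prop :=
  (forall t, 0 <= t -> f x @[x --> t^'+] --> f t) /\
  (forall t, 0 < t -> cvg (f x @[x --> t^'-])).

Definition leftlim (f : R -> R) (t : R) : R := lim (f x @[x --> t^'-]).
Definition eleftlim (f : R -> \bar R) (t : R) : \bar R := lim (f x @[x --> t^'-]).

Definition cadlag_minus (f : R -> \bar R) : Prop :=
  (forall t, 0 <= t -> f t != +oo%E) /\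
  (forall t, 0 <= t -> f x @[x --> t^'+] --> f t) /\
  (forall t, 0 < t -> cvg (f x @[x --> t^'-]) /\ eleftlim f t != +oo%E).

Definition cadlag_plus (f : R -> \bar R) : Prop :=
  (forall t, 0 <= t -> f t != -oo%E) /\
  (forall t, 0 <= t -> f x @[x --> t^'+] --> f t) /\
  (forall t, 0 < t -> cvg (f x @[x --> t^'-]) /\ eleftlim f t != -oo%E).

Definition eta_minus (eta : R -> R) (t : R) : R :=
  if t == 0 then 0 else leftlim eta t.

(* (phi, eta) solves the extended Skorokhod problem on [l, r] for psi *)
Definition ESP (l r : R -> \bar R) (psi phi eta : R -> R) : Prop :=
  [/\ cadlag phi, cadlag eta,
      (forall t, 0 <= t ->
         phi t = psi t + eta t /\ (l t <= (phi t)%:E <= r t)%E),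
      (forall s t, 0 <= s -> s <= t ->
         ((forall u, s < u -> u <= t -> ((phi u)%:E < r u)%E) -> eta t - eta s >= 0) /\
         ((forall u, s < u -> u <= t -> (l u < (phi u)%:E)%E) -> eta t - eta s <= 0))
    & (forall t, 0 <= t ->
         (((phi t)%:E < r t)%E -> eta t - eta_minus eta t >= 0) /\
         ((l t < (phi t)%:E)%E -> eta t - eta_minus eta t <= 0))].

(* one-dimensional standard Brownian motion started at 0 on (T, P):
   measurable coordinates, B(0) = 0, continuous paths on [0,oo), and for
   0 = t_0 < t_1 < ... < t_n the increments B(t_{i+1}) - B(t_i) are
   independent with law N(0, t_{i+1} - t_i) (normal_prob takes the
   standard deviation). *)
Definition standard_BM (d : measure_display) (T : measurableType d)
    (P : probability T R) (B : T -> R -> R) : Prop :=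
  [/\ (forall t, measurable_fun setT (fun w => B w t)),
      (forall w, B w 0 = 0),
      (forall w, {within `[0, +oo[, continuous (B w)})
    & (forall (n : nat) (t : nat -> R) (A : nat -> set R),
         t 0%N = 0 -> (forall i, (i < n)%N -> t i < t i.+1) ->
         (forall i, measurable (A i)) ->
         P (\bigcap_(i in `I_n) [set w | A i (B w (t i.+1) - B w (t i))]) =
         (\prod_(i < n) normal_prob 0 (Num.sqrt (t i.+1 - t i)) (A i))%E)].

Definition collision_times (l r : R -> \bar R) : set R :=
  [set t | 0 < t /\ (r t = l t \/ eleftlim r t = eleftlim l t)].

Definition drop_max (K' : set int) : set int :=
  [set k | K' k /\ ~ (forall j, K' j -> (j <= k)%R)].

End Defs.

From HB Require Import structures.
From mathcomp Require Import all_boot all_order all_algebra.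
From mathcomp Require Import all_classical all_reals all_analysis.
From mathcomp Require Import measurable_realfun.
From mathcomp Require Import ring lra.
Import Order.TTheory GRing.Theory Num.Theory.
Import numFieldNormedType.Exports.
Local Open Scope classical_set_scope.
Local Open Scope ring_scope.

(* Write h_k = s_(k+1) - s_k.  The hypothesis on the minimum says that over each
   step the reflected path W can move by at most c1 sqrt(h_k) in one of the two
   directions.  With probability at least some p = p(c1) > 0, the Brownian
   increment over the step exceeds (|c1| + 1) sqrt(h_k) in that direction; then
   the regulator Y = W - x - B moves by at least sqrt(h_k).  These events are
   independent, so by the second-moment method the sum of sqrt(h_k) over the
   events that occur is almost surely unbounded, and this sum is a lower bound
   for the total variation of Y. *)

Lemma total_variation_ge_sum (R : realType) (K : set int) (s : int -> R)
    (f : R -> R) (L : seq int) (a b : R) :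
  (forall i j, K i -> K j -> (i <= j)%R -> s i <= s j) ->
  sorted <%R L -> (forall k, k \in L -> K k /\ K (k + 1)) ->
  a <= b -> (forall k, k \in L -> a <= s k /\ s (k + 1) <= b) ->
  ((\sum_(k <- L) `|f (s (k + 1)) - f (s k)|)%:E <= total_variation a b f)%E.
Proof.
move=> s_mono; elim: L a => [|k L IH] a /= sL KL ab Lab.
  by rewrite big_nil total_variation_ge0.
have [ask sk1b] := Lab k (mem_head _ _).
have [Kk Kk1] := KL k (mem_head _ _).
have sk1 : s k <= s (k + 1) by apply: s_mono => //; rewrite lerDl.
move: sL; rewrite lt_path_sortedE => /andP[/allP k_lt sL].
rewrite big_cons EFinD (total_variationD f ask (le_trans sk1 sk1b)).
rewrite (total_variationD f sk1 sk1b) addeA.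
apply: leeD.
  by apply: le_trans (total_variation_ge _ sk1) _; rewrite leeDr ?total_variation_ge0.
apply: IH => // j jL; have jkL : j \in k :: L by rewrite inE jL orbT.
  exact: KL.
have [Kj Kj1] := KL j jkL; have [_ ->] := Lab j jkL; split => //.
by apply: s_mono => //; rewrite lezD1 k_lt.
Qed.

Lemma min_mulV_le_side {R : realType} {X Y : \bar R} {c z : R} : 0 < z ->
  (Order.min X Y * (z^-1)%:E <= c%:E)%E ->
  ((if `[< (X <= (c * z)%:E)%E >] then X else Y) <= (c * z)%:E)%E.
Proof.
move=> z0 minXY; have : (Order.min X Y <= (c * z)%:E)%E.
  move: minXY; case: (Order.min X Y) => [m| |] //=.
  - by rewrite -EFinM lee_fin ler_pdivrMr.
  - by rewrite gt0_mulye ?lte_fin ?invr_gt0.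
  - by rewrite leNye.
by rewrite ge_min; case: asboolP => // nX /orP[].
Qed.

Definition band {R : realType} (up : bool) (c sg : R) : set R :=
  if up then [set` `[c * sg, (c + 1) * sg]]
  else [set` `[- ((c + 1) * sg), - (c * sg)]].

Lemma measurable_band (R : realType) (up : bool) (c sg : R) :
  measurable (band up c sg).
Proof. by case: up; exact: measurable_itv. Qed.

(* The reflected path moves by at most [c1 sg] while the free path moves by at
   least [(|c1| + 1) sg] in the same direction, so the regulator absorbs at
   least [sg]. *)
Lemma regulator_increment_ge {R : realType} {l0 r0 l1 r1 : \bar R}
    {W0 W1 B0 B1 x c1 sg : R} {up : bool} :
  0 <= sg -> (l0 <= W0%:E <= r0)%E -> (l1 <= W1%:E <= r1)%E ->
  ((if up then r1 - l0 else - l1 + r0) <= (c1 * sg)%:E)%E ->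
  band up (`|c1| + 1) sg (B1 - B0) ->
  sg <= `|(W1 - x - B1) - (W0 - x - B0)|.
Proof.
move=> sg0 /andP[l0W0 W0r0] /andP[l1W1 W1r1] side.
have c1sg : c1 * sg <= `|c1| * sg by rewrite ler_wpM2r ?ler_norm.
case: up side => side; rewrite /band /= in_itv /= => /andP[lo hi].
- have : ((W1 - W0)%:E <= (c1 * sg)%:E)%E by rewrite EFinB (le_trans _ side) ?leeB.
  by rewrite lee_fin => ?; rewrite ler_normr; apply/orP; right; lra.
- have : ((W0 - W1)%:E <= (c1 * sg)%:E)%E.
    by rewrite EFinB (le_trans _ side) // [X in (_ <= X)%E]addeC leeB.
  by rewrite lee_fin => ?; rewrite ler_normr; apply/orP; left; lra.
Qed.

Lemma normal_peak_scale (R : realType) (sg : R) : 0 < sg ->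
  normal_peak sg = normal_peak 1 / sg.
Proof.
move=> sg0; rewrite /normal_peak expr1n mul1r -mulrnAr sqrtrM ?sqr_ge0//.
by rewrite sqrtr_sqr ger0_norm ?(ltW sg0)// invfM mulrC.
Qed.

(* The density is at least [normal_peak 1 * expR (- k ^+ 2 / 2) / sg] on the
   interval, whose length is [sg]. *)
Lemma normal_prob_itv_ge (R : realType) (sg k lo hi : R) : 0 < sg ->
  hi - lo = sg -> (forall y, lo <= y <= hi -> `|y| <= k * sg) ->
  ((normal_peak 1 * expR (- k ^+ 2 / 2))%:E <= normal_prob 0 sg `[lo, hi])%E.
Proof.
move=> sg0 len y_le; set q := normal_peak 1 * expR (- k ^+ 2 / 2).
have q0 : 0 <= q by rewrite mulr_ge0 ?normal_peak_ge0 ?expR_ge0.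
have -> : q%:E = (\int[lebesgue_measure]_(y in `[lo, hi]) (q / sg)%:E)%E.
  rewrite integral_cst; last exact: measurable_itv.
  have lohi : lo < hi by lra.
  have := lebesgue_measure_itv `[lo, hi]; rewrite /= lte_fin lohi -EFinD len => leb.
  by rewrite -[in LHS](divfK (lt0r_neq0 sg0) q) EFinM; congr (_ * _)%E; exact/esym.
apply: ge0_le_integral => //.
- by move=> y _; rewrite lee_fin divr_ge0 ?(ltW sg0).
- by apply/measurable_EFinP; exact: measurable_funS (measurable_normal_pdf 0 sg).
move=> y /= /[!in_itv] /= lyh; rewrite lee_fin normal_pdfE ?gt_eqF//=.
rewrite normal_peak_scale// /q mulrAC ler_wpM2l ?divr_ge0 ?normal_peak_ge0 ?(ltW sg0)//.
rewrite /normal_fun ler_expR subr0 !mulNr lerN2.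
rewrite ler_pdivrMr ?mulrn_wgt0 ?exprn_gt0// mulrAC -mulr_natr mulrA.
rewrite -mulrA [2%:R * _]mulrC mulrA divfK ?pnatr_eq0// -exprMn -real_normK ?num_real//.
by have := y_le y lyh; have := normr_ge0 y; nra.
Qed.

Lemma normal_prob_band_ge (R : realType) (up : bool) (c sg : R) :
  0 < sg -> 0 <= c ->
  ((normal_peak 1 * expR (- (c + 1) ^+ 2 / 2))%:E <=
    normal_prob 0 sg (band up c sg))%E.
Proof.
move=> sg0 c0; have csg0 : 0 <= c * sg by rewrite mulr_ge0 ?(ltW sg0).
by case: up; apply: normal_prob_itv_ge => // [|y]; rewrite ?ler_norml; lra.
Qed.

Section brownian_increments.
Variables (R : realType) (d : measure_display) (T : measurableType d).
Variables (P : probability T R) (B : T -> R -> R).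
Hypothesis HB : standard_BM P B.

Let normal_probT (sg : R) : normal_prob 0 sg setT = 1%E.
Proof. exact: integral_normal_pdf. Qed.

Lemma standard_BM_increments_indep (a b c e : R) (A C : set R) :
  0 <= a -> a < b -> b <= c -> c < e -> measurable A -> measurable C ->
  P ([set w | A (B w b - B w a)] `&` [set w | C (B w e - B w c)]) =
  (normal_prob 0 (Num.sqrt (b - a)) A * normal_prob 0 (Num.sqrt (e - c)) C)%E.
Proof.
move=> a0 ab bc ce mA mC; have [_ _ _ incr] := HB.
(* Grids in [standard_BM] start at 0 and increase strictly: hence the four cases
   [a = 0] or not, [b = c] or not. *)
have [->|a_neq0] := eqVneq a 0; have [<-|b_neqc] := eqVneq b c.
- have := incr 2%N (nth 0 [:: 0; b; e]) (nth setT [:: A; C]).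
  rewrite !big_ord_recr big_ord0 /= mul1e => <- //.
  + congr (P _); apply/seteqP; split=> w /=; first by move=> [? ?] [|[|]].
    by move=> H; split; [exact: (H 0%N)|exact: (H 1%N)].
  + by case=> [|[|]] //= _; lra.
  + by case=> [|[|i]] //=; rewrite nth_nil.
- have := incr 3%N (nth 0 [:: 0; b; c; e]) (nth setT [:: A; setT; C]).
  rewrite !big_ord_recr big_ord0 /= mul1e normal_probT mule1 => <- //.
  + congr (P _); apply/seteqP; split=> w /=; first by move=> [? ?] [|[|[|]]].
    by move=> H; split; [exact: (H 0%N)|exact: (H 2%N)].
  + have b_lt_c : b < c by rewrite lt_neqAle b_neqc.
    by case=> [|[|[|]]] //= _; lra.
  + by case=> [|[|[|i]]] //=; rewrite nth_nil.
- have := incr 3%N (nth 0 [:: 0; a; b; e]) (nth setT [:: setT; A; C]).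
  rewrite !big_ord_recr big_ord0 /= mul1e normal_probT mul1e => <- //.
  + congr (P _); apply/seteqP; split=> w /=; first by move=> [? ?] [|[|[|]]].
    by move=> H; split; [exact: (H 1%N)|exact: (H 2%N)].
  + have a_gt0 : 0 < a by rewrite lt_neqAle eq_sym a_neq0.
    by case=> [|[|[|]]] //= _; lra.
  + by case=> [|[|[|i]]] //=; rewrite nth_nil.
- have := incr 4%N (nth 0 [:: 0; a; b; c; e]) (nth setT [:: setT; A; setT; C]).
  rewrite !big_ord_recr big_ord0 /= mul1e !normal_probT mul1e mule1 => <- //.
  + congr (P _); apply/seteqP; split=> w /=; first by move=> [? ?] [|[|[|[|]]]].
    by move=> H; split; [exact: (H 1%N)|exact: (H 3%N)].
  + have a_gt0 : 0 < a by rewrite lt_neqAle eq_sym a_neq0.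
    have b_lt_c : b < c by rewrite lt_neqAle b_neqc.
    by case=> [|[|[|[|]]]] //= _; lra.
  + by case=> [|[|[|[|i]]]] //=; rewrite nth_nil.
Qed.

Lemma standard_BM_increment_law (a b : R) (A : set R) :
  0 <= a -> a < b -> measurable A ->
  P [set w | A (B w b - B w a)] = normal_prob 0 (Num.sqrt (b - a)) A.
Proof.
move=> a0 ab mA; rewrite -[RHS]mule1 -(normal_probT (Num.sqrt (b + 1 - b))).
rewrite -standard_BM_increments_indep ?ltrDl //; congr (P _).
by apply/seteqP; split=> w /= => [|[]].
Qed.

End brownian_increments.

Definition weighted_indic {R : realType} {T I : Type} (a : I -> R)
    (E : I -> set T) (F : seq I) (w : T) : R :=
  \sum_(k <- F) a k * \1_(E k) w.

Lemma weighted_indic_ge0 {R : realType} {T I : Type} (a : I -> R)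
    (E : I -> set T) (F : seq I) (w : T) :
  (forall k, 0 <= a k) -> 0 <= weighted_indic a E F w.
Proof. by move=> a0; apply: sumr_ge0 => k _; rewrite mulr_ge0 ?indic_ge0. Qed.

Lemma weighted_indic_sqr {R : realType} {T I : Type} (a : I -> R)
    (E : I -> set T) (F : seq I) (w : T) :
  weighted_indic a E F w ^+ 2 =
  weighted_indic (fun ij => a ij.1 * a ij.2) (fun ij => E ij.1 `&` E ij.2)
    [seq (i, j) | i <- F, j <- F] w.
Proof.
rewrite /weighted_indic big_allpairs expr2 big_distrl /=; apply: eq_bigr => i _.
by rewrite big_distrr; apply: eq_bigr => j _; rewrite indicI mulrACA.
Qed.

Definition subfamily_unbounded {R : realType} {I : eqType} (A : set I)
    (g : seq I -> R) : Prop :=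
  forall M : R, exists F : seq I,
    [/\ uniq F, (forall k, k \in F -> A k) & M <= g F].

Lemma esum_pinfty_subfamily_unbounded {R : realType} {I : choiceType}
    (A : set I) (f : I -> R) :
  (\esum_(k in A) (f k)%:E = +oo)%E ->
  subfamily_unbounded A (fun F => \sum_(k <- F) f k).
Proof.
move=> sum_oo M; have : (M%:E < \esum_(k in A) (f k)%:E)%E by rewrite sum_oo ltry.
move/ereal_sup_gt => [_ [B [finB BA] <-]] MB.
exists (finmap.enum_fset (fset_set B)); split.
- exact: finmap.fset_uniq.
- by move=> k; rewrite in_fset_set // inE; exact: BA.
- by move: MB; rewrite fsbig_finite // sumEFin lte_fin => /ltW.
Qed.

Section weighted_indicator_sums.
Context {R : realType} {d : measure_display} {T : measurableType d}.
Variable P : probability T R.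

Lemma measurable_weighted_indic {I : Type} (a : I -> R) (E : I -> set T)
    (F : seq I) :
  (forall k, measurable (E k)) -> measurable_fun setT (weighted_indic a E F).
Proof.
move=> mE; apply: measurable_sum => k.
by apply: measurable_funM; [exact: measurable_cst|exact: measurable_indic].
Qed.

Lemma measurable_weighted_indic_le {I : Type} (a : I -> R) (E : I -> set T)
    (F : seq I) (M : R) :
  (forall k, measurable (E k)) ->
  measurable [set w | (weighted_indic a E F w <= M)%R].
Proof.
move=> mE; rewrite -[X in measurable X]setTI.
by apply: measurable_fun_le => //; exact: measurable_weighted_indic.
Qed.

Lemma integral_weighted_indic {I : Type} (a : I -> R) (E : I -> set T)
    (F : seq I) :
  (forall k, measurable (E k)) -> (forall k, 0 <= a k) ->
  (\int[P]_w (weighted_indic a E F w)%:E =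
    (\sum_(k <- F) a k * fine (P (E k)))%:E)%E.
Proof.
move=> mE a0; rewrite -sumEFin; under eq_integral do rewrite -sumEFin.
rewrite ge0_integral_sum //; last first.
- by move=> k w _; rewrite lee_fin mulr_ge0 ?indic_ge0.
- move=> k; apply/measurable_EFinP; apply: measurable_funM.
    exact: measurable_cst.
  exact: measurable_indic.
apply: eq_bigr => k _; under eq_integral do rewrite EFinM.
rewrite ge0_integralZl_EFin //; last by apply/measurable_EFinP; exact: measurable_indic.
by rewrite integral_indic // setIT EFinM fineK ?fin_num_measure.
Qed.

(* The independent off-diagonal terms of [S ^+ 2] sum to at most
   [E[S] ^+ 2]; the diagonal ones are the [a k ^+ 2 P(E k)]. *)
Lemma second_moment_weighted_indic_le {I : eqType} (a : I -> R)
    (E : I -> set T) (F : seq I) :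
  (forall k, measurable (E k)) -> (forall k, 0 <= a k) -> uniq F ->
  (forall i j, i \in F -> j \in F -> i != j ->
     P (E i `&` E j) = (P (E i) * P (E j))%E) ->
  (\int[P]_w (weighted_indic a E F w ^+ 2)%:E <=
    ((\sum_(k <- F) a k * fine (P (E k))) ^+ 2 +
      \sum_(k <- F) a k ^+ 2 * fine (P (E k)))%:E)%E.
Proof.
move=> mE a0 uF indep; under eq_integral do rewrite weighted_indic_sqr.
rewrite integral_weighted_indic; last 2 first.
- by move=> ij; exact: measurableI.
- by move=> ij; rewrite mulr_ge0.
rewrite lee_fin big_allpairs /= expr2 big_distrl /= addrC -big_split /=.
rewrite big_seq [X in _ <= X]big_seq; apply: ler_sum => i iF.
rewrite big_distrr /= !(bigD1_seq i) //=.
rewrite setIid -expr2 lerD2l -[X in X <= _]add0r.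
apply: lerD; first by rewrite !mulr_ge0 ?fine_ge0.
rewrite [X in _ <= X]big_seq_cond [X in X <= _]big_seq_cond; apply: ler_sum.
move=> j /andP[jF ji]; rewrite indep // 1?eq_sym // fineM ?fin_num_measure //.
by rewrite mulrACA.
Qed.

Lemma integral_sqr_centered_le (f : T -> R) (m V : R) :
  measurable_fun setT f -> (forall w, 0 <= f w) -> 0 <= m ->
  (\int[P]_w (f w)%:E = m%:E)%E ->
  (\int[P]_w (f w ^+ 2)%:E <= (m ^+ 2 + V)%:E)%E ->
  (\int[P]_w ((m - f w) ^+ 2)%:E <= V%:E)%E.
Proof.
move=> mf f0 m0 If If2.
have mfc : measurable_fun setT (fun w => (m - f w) ^+ 2).
  by apply: measurable_funX; apply: measurable_funB => //; exact: measurable_cst.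
have expand : (\int[P]_w ((m - f w) ^+ 2)%:E + (2 * m * m)%:E =
    (m ^+ 2)%:E + \int[P]_w (f w ^+ 2)%:E)%E.
  transitivity (\int[P]_w (((m - f w) ^+ 2)%:E + (2 * m * f w)%:E))%E.
    rewrite ge0_integralD //.
    + congr (_ + _)%E; under eq_integral do rewrite EFinM.
      rewrite ge0_integralZl_EFin ?mulr_ge0 //; first by rewrite If EFinM.
      * by move=> w _; rewrite lee_fin.
      * exact/measurable_EFinP.
    + by move=> w _; rewrite lee_fin sqr_ge0.
    + exact/measurable_EFinP.
    + by move=> w _; rewrite lee_fin !mulr_ge0.
    + by apply/measurable_EFinP; apply: measurable_funM => //; exact: measurable_cst.
  transitivity (\int[P]_w ((m ^+ 2)%:E + (f w ^+ 2)%:E))%E.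
    by apply: eq_integral => w _; rewrite -!EFinD; congr EFin; ring.
  rewrite ge0_integralD //.
  - rewrite integral_cst // -[X in (_ = X + _)%E]mule1.
    by congr (_ * _ + _)%E; exact: probability_setT.
  - by move=> w _; rewrite lee_fin sqr_ge0.
  - by move=> w _; rewrite lee_fin sqr_ge0.
  - by apply/measurable_EFinP; exact: measurable_funX.
have := leeD2l (m ^+ 2)%:E If2; rewrite -expand -EFinD.
case: (\int[P]_w ((m - f w) ^+ 2)%:E)%E => [v| |] //; last by move=> _; rewrite leNye.
by rewrite -EFinD !lee_fin => ?; lra.
Qed.

Lemma sqr_sub_mul_prob_le (f : T -> R) (m M : R) :
  measurable_fun setT f -> M <= m ->
  (((m - M) ^+ 2)%:E * P [set w | (f w <= M)%R] <=
    \int[P]_w ((m - f w) ^+ 2)%:E)%E.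
Proof.
move=> mf Mm; have mA : measurable [set w | (f w <= M)%R].
  rewrite -[X in measurable X]setTI.
  by apply: measurable_fun_le => //; exact: measurable_cst.
rewrite -[[set w | (f w <= M)%R]]setIT -integral_indic //.
rewrite -ge0_integralZl_EFin ?sqr_ge0 //; last first.
  by apply/measurable_EFinP; exact: measurable_indic.
apply: ge0_le_integral => //.
- by move=> w _; rewrite -EFinM lee_fin mulr_ge0 ?sqr_ge0 ?indic_ge0.
- apply/measurable_EFinP; apply: measurable_funM; first exact: measurable_cst.
  exact: measurable_indic.
- by apply/measurable_EFinP; apply: measurable_funX; apply: measurable_funB.
move=> w _; rewrite -EFinM lee_fin indicE.
case: (boolP (w \in _)) => [|_]; last by rewrite mulr0 sqr_ge0.
by rewrite inE /= mulr1 => fwM; rewrite ler_sqr ?nnegrE; lra.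
Qed.

(* Second-moment method: [S] has mean [m >= p * sum a] and variance at most
   [alpha * sum a], so [S <= M <= m / 2] is unlikely. *)
Lemma prob_weighted_indic_le {I : eqType} {a : I -> R} {E : I -> set T}
    {F : seq I} {alpha p M : R} :
  (forall k, measurable (E k)) -> (forall k, 0 <= a k) -> uniq F ->
  (forall k, k \in F -> a k <= alpha) ->
  (forall k, k \in F -> (p%:E <= P (E k))%E) ->
  (forall i j, i \in F -> j \in F -> i != j ->
     P (E i `&` E j) = (P (E i) * P (E j))%E) ->
  0 < p -> 2 * M <= p * \sum_(k <- F) a k -> 0 < \sum_(k <- F) a k ->
  (P [set w | (weighted_indic a E F w <= M)%R] <=
    (4 * alpha / (p ^+ 2 * \sum_(k <- F) a k))%:E)%E.
Proof.
move=> mE a0 uF a_le pE indep p0 pM sa0; set sa := \sum_(k <- F) a k in pM sa0 *.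
set m := \sum_(k <- F) a k * fine (P (E k)).
have q0 k : 0 <= fine (P (E k)) by rewrite fine_ge0.
have q1 k : fine (P (E k)) <= 1.
  by rewrite -lee_fin fineK ?fin_num_measure ?probability_le1.
have m_ge : p * sa <= m.
  rewrite /sa /m mulr_sumr !big_seq; apply: ler_sum => k kF.
  by rewrite mulrC ler_wpM2l // -lee_fin fineK ?fin_num_measure ?pE.
have V_le : \sum_(k <- F) a k ^+ 2 * fine (P (E k)) <= alpha * sa.
  rewrite /sa mulr_sumr !big_seq; apply: ler_sum => k kF.
  by have := a_le k kF; have := a0 k; have := q0 k; have := q1 k; nra.
have M_le : M <= m by have := mulr_gt0 p0 sa0; lra.
have mS := measurable_weighted_indic a E F mE.
have var_le := integral_sqr_centered_le _ _ _ mS (fun w => weighted_indic_ge0 a E F w a0)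
  (le_trans (mulr_ge0 (ltW p0) (ltW sa0)) m_ge) (integral_weighted_indic a E F mE a0)
  (second_moment_weighted_indic_le a E F mE a0 uF indep).
have := le_trans (sqr_sub_mul_prob_le _ _ _ mS M_le) var_le.
set A := [set w | _]; have mA : measurable A by exact: measurable_weighted_indic_le.
rewrite -(fineK (fin_num_measure P A mA)) -EFinM !lee_fin => AV.
have y0 : 0 <= fine (P A) by rewrite fine_ge0.
have gap : (p * sa) ^+ 2 <= 4 * (m - M) ^+ 2.
  rewrite (_ : 4 = 2 ^+ 2 :> R); last by rewrite expr2 -natrM.
  by rewrite -exprMn ler_sqr ?nnegrE; nra.
rewrite ler_pdivlMr ?mulr_gt0 ?exprn_gt0 // -(ler_pM2r sa0).
rewrite -mulrA (_ : p ^+ 2 * sa * sa = (p * sa) ^+ 2); last by ring.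
have := ler_wpM2l y0 gap; nra.
Qed.

Lemma prob_weighted_indic_le_eps {I : eqType} {a : I -> R} {E : I -> set T}
    {F : seq I} {alpha p M e : R} :
  (forall k, measurable (E k)) -> (forall k, 0 <= a k) -> uniq F ->
  (forall k, k \in F -> a k <= alpha) ->
  (forall k, k \in F -> (p%:E <= P (E k))%E) ->
  (forall i j, i \in F -> j \in F -> i != j ->
     P (E i `&` E j) = (P (E i) * P (E j))%E) ->
  0 < p -> 0 <= M -> 0 <= alpha -> 0 < e ->
  2 * M / p + 4 * alpha / (p ^+ 2 * e) < \sum_(k <- F) a k ->
  (P [set w | (weighted_indic a E F w <= M)%R] <= e%:E)%E.
Proof.
move=> mE a0 uF a_le pE indep p0 M0 alpha0 e0; set sa := \sum_(k <- F) a k.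
have t1 : 0 <= 2 * M / p by rewrite divr_ge0 ?mulr_ge0 ?(ltW p0).
have t2 : 0 <= 4 * alpha / (p ^+ 2 * e).
  by rewrite divr_ge0 ?mulr_ge0 ?exprn_ge0 ?(ltW p0) ?(ltW e0).
move=> sa_gt; have sa0 : 0 < sa by lra.
have pM : 2 * M <= p * sa by rewrite [p * _]mulrC -ler_pdivrMr //; lra.
apply: le_trans (prob_weighted_indic_le mE a0 uF a_le pE indep p0 pM sa0) _.
rewrite lee_fin -/sa ler_pdivrMr ?mulr_gt0 ?exprn_gt0 //.
rewrite (_ : e * _ = sa * (p ^+ 2 * e)); last by ring.
by rewrite -ler_pdivrMr ?mulr_gt0 ?exprn_gt0 //; lra.
Qed.

Lemma weighted_indic_unbounded_ae {I : eqType} (A : set I) (a : I -> R)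
    (E : I -> set T) (alpha p : R) :
  (forall k, measurable (E k)) -> (forall k, 0 <= a k) -> 0 <= alpha ->
  (forall k, A k -> a k <= alpha) -> (forall k, A k -> (p%:E <= P (E k))%E) ->
  (forall i j, A i -> A j -> i != j ->
     P (E i `&` E j) = (P (E i) * P (E j))%E) ->
  0 < p -> subfamily_unbounded A (fun F => \sum_(k <- F) a k) ->
  {ae P, forall w, subfamily_unbounded A (fun F => weighted_indic a E F w)}.
Proof.
move=> mE a0 alpha0 a_le pE indep p0 /choice[Fn FnP].
pose bounded (M : nat) := \bigcap_n [set w | weighted_indic a E (Fn n%:R) w <= M%:R].
have mbounded M : measurable (bounded M).
  by apply: bigcapT_measurable => n; exact: measurable_weighted_indic_le.
have bounded0 M : P (bounded M) = 0%E.
  apply/eqP; rewrite eq_le measure_ge0 andbT; apply/lee_addgt0Pr => e e0.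
  pose x := 2 * M%:R / p + 4 * alpha / (p ^+ 2 * e).
  have [uF FA sum_ge] := FnP (Num.truncn x).+1%:R.
  set F := Fn _ in uF FA sum_ge.
  have sub : bounded M `<=` [set w | (weighted_indic a E F w <= M%:R)%R].
    by move=> w; apply.
  rewrite add0e; apply: le_trans (le_measure _ _ _ sub) _; rewrite ?inE //.
    exact: measurable_weighted_indic_le.
  apply: (prob_weighted_indic_le_eps mE a0 uF _ _ _ p0 (ler0n _ _) alpha0 e0).
  - by move=> k /FA; exact: a_le.
  - by move=> k /FA; exact: pE.
  - by move=> i j /FA Ai /FA Aj; exact: indep.
  exact: lt_le_trans (truncnS_gt x) sum_ge.
have null : P.-negligible (\bigcup_M bounded M).
  apply: negligible_bigcup => M.
  by exists (bounded M); split; [exact: mbounded|exact: bounded0|].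
apply: negligibleS null => w /= /existsNP[M0 /forallNP small].
exists (Num.truncn M0).+1 => // n _ /=; rewrite leNgt; apply/negP => big.
have [uF FA _] := FnP n%:R; apply: (small (Fn n%:R)); split => //.
by apply: ltW; apply: lt_trans big; exact: truncnS_gt.
Qed.

End weighted_indicator_sums.

Lemma drop_max_succ {K' : set int} :
  (forall i j m, K' i -> K' j -> (i <= m)%R -> (m <= j)%R -> K' m) ->
  forall k, drop_max K' k -> K' k /\ K' (k + 1).
Proof.
move=> K'_convex k [K'k not_max]; split => //.
have [j [K'j kj]] : exists j, K' j /\ (k < j)%R.
  apply: contrapT => no_succ; apply: not_max => j K'j; rewrite leNgt.
  by apply/negP => kj; apply: no_succ; exists j.
by apply: (K'_convex k j) => //; rewrite ?lerDl ?lezD1.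
Qed.

Section regulator_variation.
Context {R : realType} {d : measure_display} {T : measurableType d}.
Context {P : probability T R} {B : T -> R -> R}.
Context {K' : set int} {s : int -> R} {tau c : R} {up : int -> bool}.
Hypothesis HB : standard_BM P B.
Hypothesis K'_convex :
  forall i j m, K' i -> K' j -> (i <= m)%R -> (m <= j)%R -> K' m.
Hypothesis s_incr : forall i j, K' i -> K' j -> (i < j)%R -> s i < s j.
Hypothesis s_range : forall k, K' k -> 0 <= s k <= tau.
Hypothesis c0 : 0 <= c.

Let sd k := Num.sqrt (s (k + 1) - s k).
Let E k := [set w | band (up k) c (sd k) (B w (s (k + 1)) - B w (s k))].

Lemma s_succ_gt k : drop_max K' k -> s k < s (k + 1).
Proof.
by move=> /(drop_max_succ K'_convex)[K'k K'k1]; apply: s_incr; rewrite ?ltrDl.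
Qed.

Lemma s_le_succ i j : drop_max K' i -> drop_max K' j -> (i < j)%R ->
  s (i + 1) <= s j.
Proof.
move=> /(drop_max_succ K'_convex)[_ K'i1] /(drop_max_succ K'_convex)[K'j _].
rewrite -lezD1 le_eqVlt => /orP[/eqP->//|ij]; exact/ltW/s_incr.
Qed.

Lemma step_sd_le k : drop_max K' k -> sd k <= Num.sqrt tau.
Proof.
move=> /(drop_max_succ K'_convex)[/s_range/andP[sk0 _] /s_range/andP[_ sk1]].
by apply: ler_wsqrtr; lra.
Qed.

Lemma measurable_band_event k : measurable (E k).
Proof.
have [mB _ _ _] := HB; rewrite -[E k]setTI.
by apply: (measurable_funB (mB _) (mB _)) => //; exact: measurable_band.
Qed.

Lemma prob_band_event_ge k : drop_max K' k ->
  ((normal_peak 1 * expR (- (c + 1) ^+ 2 / 2))%:E <= P (E k))%E.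
Proof.
move=> Kk; have /(drop_max_succ K'_convex)[/s_range/andP[sk0 _] _] := Kk.
rewrite /E standard_BM_increment_law ?s_succ_gt //; last exact: measurable_band.
by apply: normal_prob_band_ge; rewrite // sqrtr_gt0 subr_gt0 s_succ_gt.
Qed.

Lemma band_events_indep i j : drop_max K' i -> drop_max K' j -> i != j ->
  P (E i `&` E j) = (P (E i) * P (E j))%E.
Proof.
wlog ij : i j / (i < j)%R => [indep Ki Kj|Ki Kj _].
  rewrite neq_lt => /orP[ij|ji]; first by rewrite indep // lt_eqF.
  by rewrite setIC muleC indep // lt_eqF.
have s_ge0 k : drop_max K' k -> 0 <= s k.
  by move=> /(drop_max_succ K'_convex)[/s_range/andP[]].
rewrite /E standard_BM_increments_indep ?s_succ_gt ?s_le_succ ?s_ge0 //;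
  try exact: measurable_band.
by rewrite !standard_BM_increment_law ?s_succ_gt ?s_ge0 //; exact: measurable_band.
Qed.

Lemma total_variation_ge_weighted_indic (Y : R -> R) (F : seq int) (w : T) :
  0 <= tau -> uniq F -> (forall k, k \in F -> drop_max K' k) ->
  (forall k, drop_max K' k -> E k w -> sd k <= `|Y (s (k + 1)) - Y (s k)|) ->
  ((weighted_indic sd E F w)%:E <= total_variation 0 tau Y)%E.
Proof.
move=> tau0 uF FK jump.
apply: le_trans (_ : (\sum_(k <- F) `|Y (s (k + 1)) - Y (s k)|)%:E <= _)%E.
  rewrite lee_fin /weighted_indic !big_seq; apply: ler_sum => k kF.
  rewrite indicE; case: (boolP (w \in E k)) => [|_]; last by rewrite mulr0.
  by rewrite inE mulr1; exact/jump/FK.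
rewrite -(perm_big _ (permEl (perm_sort <=%O F))).
apply: (@total_variation_ge_sum _ K') => //.
- move=> i j Ki Kj; rewrite le_eqVlt => /orP[/eqP->//|ij].
  exact: ltW (s_incr i j Ki Kj ij).
- by rewrite sort_lt_sorted.
- by move=> k; rewrite mem_sort => /FK /(drop_max_succ K'_convex).
move=> k; rewrite mem_sort => /FK /(drop_max_succ K'_convex)[].
by move=> /s_range/andP[sk0 _] /s_range/andP[_ sk1].
Qed.

End regulator_variation.

Theorem theorem4p2 (R : realType) (d : measure_display) (T : measurableType d)
    (P : probability T R) (B : T -> R -> R)
    (l r : R -> \bar R) (x : R) (W : T -> R -> R)
    (tau : R) (K' : set int) (s : int -> R) (c1 : R) :
  standard_BM P B ->
  cadlag_minus l -> cadlag_plus r ->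
  (forall t, 0 <= t -> (l t <= r t)%E) ->
  (forall w, ESP l r (fun t => x + B w t) (W w) (fun t => W w t - x - B w t)) ->
  0 < tau ->
  ereal_inf [set t%:E | t in collision_times l r] = tau%:E ->
  (forall i j m, K' i -> K' j -> (i <= m)%R -> (m <= j)%R -> K' m) ->
  (forall i j, K' i -> K' j -> (i < j)%R -> s i < s j) ->
  (forall k, K' k -> 0 <= s k <= tau) ->
  (forall k, drop_max K' k ->
     (Order.min (r (s (k + 1)%R) - l (s k)) (- l (s (k + 1)%R) + r (s k))
        * ((Num.sqrt (s (k + 1)%R - s k))^-1)%:E <= c1%:E)%E) ->
  (\esum_(k in drop_max K') (Num.sqrt (s (k + 1)%R - s k))%:E = +oo)%E ->
  {ae P, forall w, total_variation 0 tau (fun t => W w t - x - B w t) = +oo%E}.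
Proof.
move=> HB _ _ _ esp tau0 _ K'_convex s_incr s_range side sum_oo.
pose sd k := Num.sqrt (s (k + 1) - s k).
pose up k := `[< (r (s (k + 1)%R) - l (s k) <= (c1 * sd k)%:E)%E >].
have c0 : 0 <= `|c1| + 1 by rewrite addr_ge0.
have p0 : 0 < normal_peak 1 * expR (- (`|c1| + 1 + 1) ^+ 2 / 2).
  by rewrite mulr_gt0 ?expR_gt0 ?normal_peak_gt0 ?oner_neq0.
have := weighted_indic_unbounded_ae P (drop_max K') sd _ (Num.sqrt tau) _
  (measurable_band_event (s := s) (c := `|c1| + 1) (up := up) HB)
  (fun k => sqrtr_ge0 _) (sqrtr_ge0 tau) (step_sd_le K'_convex s_range)
  (prob_band_event_ge (up := up) HB K'_convex s_incr s_range c0)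
  (band_events_indep (c := `|c1| + 1) (up := up) HB K'_convex s_incr s_range)
  p0 (esum_pinfty_subfamily_unbounded _ _ sum_oo).
apply: filterS => w unb; apply: eq_infty => M.
have [F [uF FK MF]] := unb M; apply: le_trans (_ : M%:E <= _%:E)%E _.
  by rewrite lee_fin; exact: MF.
apply: (total_variation_ge_weighted_indic K'_convex s_incr s_range)
  (ltW tau0) uF FK _ => k Kk.
have /(drop_max_succ K'_convex)[/s_range/andP[sk0 _] /s_range/andP[sk1 _]] := Kk.
have [_ _ bracket _ _] := esp w.
have [_ W0] := bracket _ sk0; have [_ W1] := bracket _ sk1.
move=> /= band_w; apply: (regulator_increment_ge (sqrtr_ge0 _) W0 W1 _ band_w).
apply: min_mulV_le_side (side k Kk).
by rewrite sqrtr_gt0 subr_gt0 (s_succ_gt K'_convex s_incr).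
Qed.
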